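(* Define $f:\mathbb{N}\to\mathbb{N}$ by $f(n)=n$ if $n$ is even and $f(n)=\frac{n+1}{2}$ if $n$ is odd, and let $f^{\downarrow}(n)$ be the first even value in the sequence $n, f(n), f(f(n)), \dots$ (obtained by applying $f$ repeatedly until the result is even). Then every fence of even cardinality is locally unsymmetric, and every (upper or lower) fence of odd cardinality $n\ge3$ is retractable to the $f^{\downarrow}(n)$-fence.
   Context: An $n$-fence is a poset of $n$ elements $a_1,\dots,a_n$ whose order is generated by alternating relations $a_1<a_2>a_3<\cdots a_n$ (lower fence) or $a_1>a_2<a_3>\cdots a_n$ (upper fence); for even $n$ these coincide up to isomorphism. Notation: $\ell(X)$ is the cardinality of a longest chain of a poset $X$. A subset $A$ of a poset $X$ is maximally ordered in $X$ if $|\{(a,b)\in A\times A:a<b\}|$ is maximal among subsets of $X$ of cardinality $|A|$. For $\sigma\in\mathrm{Aut}(P)$, $\Sigma(\sigma)=\{a:\sigma(a)\ne a\}$. For finite $Q$ and $r\ge2$: $\sigma\in\mathrm{Aut}(P)$ is a $(Q,r)$-generator if there exist subsets $S_0,\dots,S_{r-1}\subset\Sigma(\sigma)$, each isomorphic to $Q$, which are smallest maximally ordered subsets of $\Sigma(\sigma)$ with $\sigma(S_i)=S_{(i+1)\bmod r}$, $\ell(S_i)=\ell(\Sigma(\sigma))$, $\bigcup_iS_i=\Sigma(\sigma)$; distinct $S_i,S_j$ are $(Q,r)$-symmetric subsets. Elements $a,b$ are $(Q,r,0)$-symmetric if $a=b$; $(Q,r,1)$-symmetric if there are $(Q,r)$-symmetric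 subsets $A,B$ with generator $\sigma$, $a\in A$, $b=\sigma^q(a)\in B$, $1\le q<r$; for $n\ge2$, $(Q,r,n)$-symmetric if not $(Q,r,j)$-symmetric for $j<n$ but there exist $c$, $j<n$ with $a$ $(Q,r,j)$-symmetric to $c$ and $c$ $(Q,r,n-j)$-symmetric to $b$; $(Q,r)$-symmetric if $(Q,r,n)$-symmetric for some $n\ge0$ (an equivalence relation). $P\oslash_rQ$ is the quotient poset of equivalence classes with $E\le F$ iff some $e\in E$, $f\in F$ satisfy $e\le f$. $P$ is locally symmetric if $P\oslash_rQ\not\cong P$ for some finite $Q$ and $r\ge2$, and locally unsymmetric otherwise. $P$ is retractable to $\tilde P$ if there is a sequence of pairs $(Q_1,r_1),(Q_2,r_2),\dots$ with $\tilde P\cong(\cdots((P\oslash_{r_1}Q_1)\oslash_{r_2}Q_2)\cdots)$ and $\tilde P\not\cong P$. *)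

From HB Require Import structures.
From mathcomp Require Import all_boot all_fingroup.
From mathcomp Require Import boolp.

Set Implicit Arguments.
Unset Strict Implicit.
Unset Printing Implicit Defensive.

(* A finite poset: a finite carrier with an order relation (the quotient
   construction below produces a relational structure of the same kind). *)
Record fposet := FPoset { fp_sort :> finType; fp_le : rel fp_sort }.

Section Posets.
Variable P : fposet.
Local Notation T := (fp_sort P).
Local Notation le := (@fp_le P).

Definition fp_lt (a b : T) : bool := (a != b) && le a b.

Definition chainb (C : {set T}) : bool :=
  [forall a in C, forall b in C, le a b || le b a].
Definition ell (X : {set T}) : nat :=
  \max_(C : {set T} | (C \subset X) && chainb C) #|C|.

Definition npairs (A : {set T}) : nat :=
  #|[set p : T * T | [&& p.1 \in A, p.2 \in A & fp_lt p.1 p.2]]|.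

Definition max_ordered (X A : {set T}) : Prop :=
  A \subset X /\
  forall B : {set T}, B \subset X -> #|B| = #|A| -> npairs B <= npairs A.

Definition is_aut (s : {perm T}) : Prop := forall a b, le (s a) (s b) = le a b.

Definition Sigma (s : {perm T}) : {set T} := [set a | s a != a].

Definition iso_sub (S : {set T}) (Q : fposet) : Prop :=
  exists f : Q -> T, [/\ injective f, f @: setT = S &
                         forall x y, le (f x) (f y) = fp_le x y].

(* a family S_0..S_{r-1} satisfying the conditions of a generator, except
   isomorphism to Q and minimality *)
Definition family_ok (s : {perm T}) (r : nat) (S : nat -> {set T}) : Prop :=
  (forall i, i < r ->
     [/\ S i \subset Sigma s, max_ordered (Sigma s) (S i),
         s @: S i = S (i.+1 %% r) & ell (S i) = ell (Sigma s)]) /\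
  \bigcup_(i < r) S i = Sigma s.

(* s is a (Q,r)-generator, witnessed by the family S of (Q,r)-symmetric subsets;
   "smallest": no family with the same properties has smaller members *)
Definition generator_fam (Q : fposet) (r : nat) (s : {perm T})
  (S : nat -> {set T}) : Prop :=
  [/\ 2 <= r, is_aut s, family_ok s r S,
      (forall i, i < r -> iso_sub (S i) Q) &
      (forall S', family_ok s r S' -> #|S 0| <= #|S' 0|)].

Definition sym1 (Q : fposet) (r : nat) (a b : T) : Prop :=
  exists s S, generator_fam Q r s S /\
   exists i j q, [/\ i < r, j < r, S i != S j, a \in S i &
                 [/\ 1 <= q < r, b = (s ^+ q)%g a & b \in S j]].

(* (Q,r,n)-symmetric (without the minimality clause, which does not affect
   the relation "(Q,r,n)-symmetric for some n") *)
Inductive symN (Q : fposet) (r : nat) : nat -> T -> T -> Prop :=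
| symN0 a : symN Q r 0 a a
| symN1 a b : sym1 Q r a b -> symN Q r 1 a b
| symNS n j a c b : 1 <= j < n -> symN Q r j a c -> symN Q r (n - j) c b ->
    symN Q r n a b.

Definition symm (Q : fposet) (r : nat) (a b : T) : Prop :=
  exists n, symN Q r n a b.

Definition sym_class (Q : fposet) (r : nat) (a : T) : {set T} :=
  [set b | `[< symm Q r a b >]].
Definition sym_classes (Q : fposet) (r : nat) : {set {set T}} :=
  [set sym_class Q r a | a in T].

End Posets.

Definition quot_sort (P Q : fposet) (r : nat) : finType :=
  {C : {set P} | C \in sym_classes P Q r}.
Definition quot_le (P Q : fposet) (r : nat) : rel (quot_sort P Q r) :=
  fun E F => [exists e in val E, exists f in val F, fp_le e f].
Definition quot (P Q : fposet) (r : nat) : fposet :=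
  @FPoset (quot_sort P Q r) (@quot_le P Q r).

Definition fp_iso (P P' : fposet) : Prop :=
  exists f : P -> P', bijective f /\ forall a b, fp_le (f a) (f b) = fp_le a b.

Definition locally_symmetric (P : fposet) : Prop :=
  exists (Q : fposet) (r : nat), 2 <= r /\ ~ fp_iso (quot P Q r) P.
Definition locally_unsymmetric (P : fposet) : Prop := ~ locally_symmetric P.

Definition iter_quot (P : fposet) (s : seq (fposet * nat)) : fposet :=
  foldl (fun X qr => quot X qr.1 qr.2) P s.

Definition retractable (P P' : fposet) : Prop :=
  exists s : seq (fposet * nat),
    [/\ all (fun qr => 2 <= qr.2) s, fp_iso (iter_quot P s) P' & ~ fp_iso P' P].

(* fences on 'I_n (0-indexed: element i is a_{i+1}).
   up = false: lower fence a_1 < a_2 > a_3 < ...  (even indices minimal)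
   up = true : upper fence a_1 > a_2 < a_3 > ...  (odd indices minimal) *)
Definition fence_le (up : bool) (n : nat) : rel 'I_n :=
  fun i j => (i == j) || ((odd i == up) && ((j == i.+1 :> nat) || (i == j.+1 :> nat))).
Definition fence (up : bool) (n : nat) : fposet := FPoset (@fence_le up n).

(* f(n) = n for n even, (n+1)/2 for n odd; f_down n = first even value of
   n, f n, f (f n), ...  (fuel n suffices for n >= 2) *)
Definition fmap (n : nat) : nat := if odd n then n.+1./2 else n.
Fixpoint fdown_aux (fuel n : nat) : nat :=
  if ~~ odd n then n else
  match fuel with 0 => n | k.+1 => fdown_aux k (fmap n) end.
Definition fdown (n : nat) : nat := fdown_aux n n.

(* An automorphism of the n-fence preserves adjacency, so it is either the
   identity or the reversal i |-> n-1-i, and the reversal preserves the order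
   only when n is odd.  Hence for even n every symmetric class is a singleton
   and every quotient of the fence is the fence itself.  For n = 2m+1 the
   reversal is a (Q,2)-generator, Q the m-fence, whose symmetric subsets are the
   two halves on either side of the middle point; they are maximally ordered
   because a k-point subset of a fence has at most k-1 strict comparabilities,
   a bound attained by intervals.  The symmetric classes are then the pairs
   {i, 2m-i}, so the quotient is the (m+1)-fence, and iterating n |-> (n+1)/2
   reaches the f_down(n)-fence. *)

From mathcomp Require Import all_boot all_fingroup.
From mathcomp Require Import boolp zify.

Set Implicit Arguments.
Unset Strict Implicit.
Unset Printing Implicit Defensive.

Lemma fp_iso_refl (A : fposet) : fp_iso A A.
Proof. by exists id; split => //; exists id. Qed.

Lemma fp_iso_sym (A B : fposet) : fp_iso A B -> fp_iso B A.
Proof.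
case=> f [[g fK gK] f_le]; exists g; split; first by exists f.
by move=> a b; rewrite -f_le !gK.
Qed.

Lemma fp_iso_trans (A B C : fposet) : fp_iso A B -> fp_iso B C -> fp_iso A C.
Proof.
case=> f [f_bij f_le] [g [g_bij g_le]]; exists (g \o f); split; first exact: bij_comp.
by move=> a b /=; rewrite g_le f_le.
Qed.

Lemma fp_iso_card (A B : fposet) : fp_iso A B -> #|A| = #|B|.
Proof. by case=> f [f_bij _]; apply: bij_eq_card f_bij. Qed.

Definition adjn (i j : nat) : bool := (i == j.+1) || (j == i.+1).

Lemma fence_leE up N (i j : 'I_N) :
  fence_le up i j = (i == j :> nat) || (odd i == up) && adjn i j.
Proof. by rewrite /fence_le -val_eqE /adjn [X in _ && X]orbC. Qed.

Lemma fence_comparableE up N (i j : 'I_N) :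
  fence_le up i j || fence_le up j i = (i == j) || adjn i j.
Proof. by rewrite !fence_leE -val_eqE /adjn /=; lia. Qed.

Lemma fence_le_rev up N (i j : 'I_N) :
  fence_le up (rev_ord i) (rev_ord j) = fence_le (up (+) ~~ odd N) i j.
Proof. by rewrite !fence_leE /adjn /=; have := ltn_ord i; have := ltn_ord j; lia. Qed.

Lemma fence_iso_lower up N : ~~ odd N -> fp_iso (fence up N) (fence false N).
Proof.
case: up => even_N; last exact: fp_iso_refl.
exists (@rev_ord N); split; first by exists (@rev_ord N); apply: rev_ordK.
by move=> i j /=; rewrite fence_le_rev even_N.
Qed.

Lemma adjn_path_rigid n (F : nat -> nat) :
  (forall k, k < n -> adjn (F k) (F k.+1)) ->
  (forall k, k.+1 < n -> F k.+2 != F k) ->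
  (forall k, k <= n -> F k <= n) ->
  (forall k, k <= n -> F k = k) \/ (forall k, k <= n -> F k = n - k).
Proof.
move=> F_adj F_skip F_le.
have [n0|n_gt0] := posnP n.
  by left=> k; have := F_le k; rewrite n0; lia.
wlog F1 : F F_adj F_skip F_le / F 1 = (F 0).+1.
  move=> incr; case/orP: (F_adj 0 n_gt0) => /eqP F01; last exact: incr.
  have [k lt_kn|k lt_kn|k _||G_id|G_rev] := incr (fun k => n - F k).
  - have := F_le k (ltnW lt_kn); have := F_le k.+1 lt_kn.
    by have := F_adj k lt_kn; rewrite /adjn; lia.
  - have := F_le k (ltnW (ltnW lt_kn)); have := F_le k.+2 lt_kn.
    by have := F_skip k lt_kn; lia.
  - exact: leq_subr.
  - by have := F_le 0 (leq0n n); have := F_le 1 n_gt0; lia.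
  - by right=> k le_kn; have := G_id k le_kn; have := F_le k le_kn; lia.
  - by left=> k le_kn; have := G_rev k le_kn; have := F_le k le_kn; lia.
have F_succ k : k < n -> F k.+1 = (F k).+1.
  elim: k => // k IH lt_kn.
  have := F_adj k.+1 lt_kn; have := F_skip k lt_kn.
  by have := IH (ltnW lt_kn); rewrite /adjn; lia.
have F_shift k : k <= n -> F k = F 0 + k.
  elim: k => [|k IH lt_kn]; first by rewrite addn0.
  by rewrite F_succ // IH ?addnS // ltnW.
by left=> k le_kn; have := F_le n (leqnn n); rewrite (F_shift k) // (F_shift n) //; lia.
Qed.

Lemma fence_aut_cases up n (f : 'I_n.+1 -> 'I_n.+1) : injective f ->
  (forall i j, fence_le up (f i) (f j) = fence_le up i j) ->
  f =1 id \/ f =1 @rev_ord n.+1.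
Proof.
move=> f_inj f_le.
have f_adj i j : adjn (f i) (f j) = adjn i j.
  have := fence_comparableE up (f i) (f j); rewrite !f_le fence_comparableE (inj_eq f_inj).
  by case: eqP => [->|_] //= _; rewrite /adjn; lia.
pose F k := nat_of_ord (f (inord k)).
have [k lt_kn|k lt_kn|k _|F_id|F_rev] := @adjn_path_rigid n F.
- by rewrite /F f_adj /adjn !inordK //; lia.
- apply/eqP => /val_inj /f_inj eq_k.
  by have := congr1 (@nat_of_ord _) eq_k; rewrite !inordK //; lia.
- by rewrite -ltnS ltn_ord.
- left=> i; apply: val_inj.
  by have := F_id i (leq_ord i); rewrite /F inord_val.
- right=> i; apply: val_inj.
  by have := F_rev i (leq_ord i); rewrite /F inord_val /= subSS.
Qed.

Lemma sym1_orbit (P Q : fposet) r (a b : P) : sym1 Q r a b ->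
  exists s : {perm P}, [/\ is_aut s, a \in Sigma s & exists q, b = (s ^+ q)%g a].
Proof.
case=> s [S [[_ s_aut [S_ok _] _ _] [i [_ [q [lt_ir _ _ aSi [_ -> _]]]]]]].
exists s; split => //; last by exists q.
by have [/subsetP SiSigma _ _ _] := S_ok i lt_ir; apply: SiSigma.
Qed.

Section QuotientByFibres.
Variables (X Q Y : fposet) (r : nat) (k : X -> Y) (sec : Y -> X).
Hypothesis secK : cancel sec k.
Hypothesis sym1_fibre : forall a b, sym1 Q r a b -> k a = k b.
Hypothesis fibre_sym1 : forall a b, k a = k b -> a = b \/ sym1 Q r a b.
Hypothesis le_image :
  forall y y', fp_le y y' <-> exists e f, [/\ k e = y, k f = y' & fp_le e f].

Lemma symm_fibre a b : symm Q r a b <-> k a = k b.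
Proof.
split; last first.
  by case/fibre_sym1 => [->|ab]; [exists 0; constructor | exists 1; constructor].
by case=> n; elim=> [//|a' b' /sym1_fibre|n' j a' c b' _ _ -> _ ->].
Qed.

Lemma sym_class_fibre a : sym_class Q r a = [set b | k a == k b].
Proof. by apply/setP => b; rewrite !inE; apply/asboolP/eqP => /symm_fibre. Qed.

Lemma quot_iso_fibres : fp_iso (quot X Q r) Y.
Proof.
have mem y : sym_class Q r (sec y) \in sym_classes X Q r by apply: imset_f.
pose phi y : quot X Q r := Sub (sym_class Q r (sec y)) (mem y).
have phi_inj : injective phi.
  move=> y y' /(congr1 val) /setP /(_ (sec y)).
  by rewrite /= !sym_class_fibre !inE !secK eqxx => /esym /eqP.
have phi_surj (E : quot X Q r) : E \in codom phi.
  case: E => C C_cls; have /imsetP [a _ C_a] := C_cls; apply/codomP; exists (k a).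
  by apply: val_inj; rewrite /= C_a !sym_class_fibre secK.
apply: fp_iso_sym; exists phi; split.
  apply: (inj_card_bij phi_inj); rewrite -(card_codom phi_inj).
  by apply/subset_leq_card/subsetP => E _; apply: phi_surj.
move=> y y'; rewrite /= /quot_le /= !sym_class_fibre !secK.
apply/existsP/idP => [[e /andP [] /[!inE] /eqP ey /existsP [f /andP [] /[!inE] /eqP fy' ef]]|].
  by apply/le_image; exists e, f.
case/le_image => e [f [ey fy' ef]]; exists e; rewrite inE ey eqxx.
by apply/existsP; exists f; rewrite inE fy' eqxx.
Qed.

End QuotientByFibres.

Section Chains.
Variable P : fposet.
Implicit Types (A B C : {set P}) (s : {perm P}).

Lemma is_aut_inv s : is_aut s -> is_aut s^-1%g.
Proof. by move=> s_aut a b; rewrite -s_aut !permKV. Qed.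

Lemma ell_mono A B : A \subset B -> ell A <= ell B.
Proof.
move=> AB; apply/bigmax_leqP => C /andP [CA C_chain]; apply: leq_bigmax_cond.
by rewrite C_chain (subset_trans CA AB).
Qed.

Lemma chain_imset s C : is_aut s -> chainb C -> chainb (s @: C).
Proof.
move=> s_aut /forall_inP C_chain; apply/forall_inP => _ /imsetP [a aC ->].
apply/forall_inP => _ /imsetP [b bC ->]; rewrite !s_aut.
exact: (forall_inP (C_chain a aC) b bC).
Qed.

Lemma ell_imset s A : is_aut s -> ell (s @: A) = ell A.
Proof.
have ell_le_imset t B : is_aut t -> ell B <= ell (t @: B).
  move=> t_aut; apply/bigmax_leqP => C /andP [CB C_chain].
  rewrite -(card_imset C (@perm_inj _ t)); apply: leq_bigmax_cond.
  by rewrite chain_imset // imsetS.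
move=> s_aut; apply/eqP; rewrite eqn_leq ell_le_imset // andbT.
have {2}-> : A = s^-1%g @: (s @: A).
  by rewrite -imset_comp (eq_imset _ (permK s)) imset_id.
by apply: ell_le_imset; apply: is_aut_inv.
Qed.

Lemma ell_setU_incomparable A B :
    (forall a b, a \in A -> b \in B -> ~~ (fp_le a b || fp_le b a)) ->
  ell (A :|: B) = maxn (ell A) (ell B).
Proof.
move=> AB_incomp; apply/anti_leq/andP; split; last first.
  by rewrite geq_max !ell_mono ?subsetUl ?subsetUr.
apply/bigmax_leqP => C /andP [/subsetP C_AB /forall_inP C_chain].
have [CA|/subsetPn [b bC bA]] := boolP (C \subset A).
  by apply: leq_trans (leq_maxl _ _); apply: leq_bigmax_cond; rewrite CA; apply/forall_inP.
have bB : b \in B by move: (C_AB b bC); rewrite inE (negbTE bA).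
have CB : C \subset B.
  apply/subsetP => a aC; have /setUP [aA|//] := C_AB a aC.
  by have := forall_inP (C_chain a aC) b bC; rewrite (negbTE (AB_incomp a b aA bB)).
by apply: leq_trans (leq_maxr _ _); apply: leq_bigmax_cond; rewrite CB; apply/forall_inP.
Qed.

Lemma iso_sub_imset s A Q : is_aut s -> iso_sub A Q -> iso_sub (s @: A) Q.
Proof.
move=> s_aut [f [f_inj f_im f_le]]; exists (s \o f); split.
- exact: inj_comp (@perm_inj _ s) f_inj.
- by rewrite imset_comp f_im.
- by move=> x y /=; rewrite s_aut f_le.
Qed.

End Chains.

Lemma fence_aut_even up n (s : {perm fence up n}) : ~~ odd n -> is_aut s -> s =1 id.
Proof.
case: n s => [|n] s even_n s_aut; first by case.
have n_gt0 : 0 < n by case: n {s s_aut} even_n.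
have [//|s_rev] := fence_aut_cases (@perm_inj _ s) s_aut.
have := s_aut (inord 0) (inord 1); rewrite /= !s_rev fence_le_rev !fence_leE !inordK //.
by move: even_n; rewrite /adjn; case: (up) => /=; lia.
Qed.

Lemma even_fence_locally_unsymmetric up n :
  ~~ odd n -> locally_unsymmetric (fence up n).
Proof.
move=> even_n [Q [r [_ not_iso]]]; apply: not_iso.
apply: (@quot_iso_fibres _ _ _ r id id) => // [a b|a b ->|y y']; last 2 first.
- by left.
- by split=> [le_yy'|[e [f [-> -> //]]]]; exists y, y'.
case/sym1_orbit => s [/(fence_aut_even even_n) s_id].
by rewrite inE s_id eqxx.
Qed.

(* The iterated quotients are only isomorphic to fences, so fences are handled
   through coordinates [pos] with inverse [pt]. *)
Section FenceCoordinates.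
Variables (X : fposet) (up : bool) (N : nat).
Variables (pt : 'I_N -> X) (pos : X -> 'I_N).
Hypotheses (ptK : cancel pt pos) (posK : cancel pos pt).
Hypothesis le_pos : forall a b, fp_le a b = fence_le up (pos a) (pos b).
Implicit Types A : {set X}.

Lemma pos_eqE a b : (pos a == pos b :> nat) = (a == b).
Proof. by apply/eqP/eqP => [/val_inj/(can_inj posK)|->]. Qed.

Lemma lt_pos a b : fp_lt a b = (odd (pos a) == up) && adjn (pos a) (pos b).
Proof. by rewrite /fp_lt le_pos fence_leE -pos_eqE /adjn; lia. Qed.

Definition pair_top (p : X * X) : X := if pos p.1 < pos p.2 then p.2 else p.1.

Lemma pos_pair_top p : nat_of_ord (pos (pair_top p)) = maxn (pos p.1) (pos p.2).
Proof. by rewrite /pair_top; case: ifP; lia. Qed.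

Definition strict_pairs (A : {set X}) : {set X * X} :=
  [set p | [&& p.1 \in A, p.2 \in A & fp_lt p.1 p.2]].

Lemma npairsE A : npairs A = #|strict_pairs A|.
Proof. by []. Qed.

Lemma pair_top_inj A : {in strict_pairs A &, injective pair_top}.
Proof.
move=> [a b] [a' b']; rewrite !inE /= !lt_pos /adjn.
move=> /and4P [_ _ a_up ab] /and4P [_ _ a'_up a'b'].
move=> /(congr1 (fun x => nat_of_ord (pos x))); rewrite !pos_pair_top /= => top_eq.
by congr pair; apply/eqP; rewrite -pos_eqE; lia.
Qed.

Lemma npairs_le_card A : npairs A <= #|A|.-1.
Proof.
(* [pair_top] is injective on strict pairs and never hits the lowest point. *)
have [->|[x0 x0A]] := set_0Vmem A.
  by rewrite cards0 leqn0 npairsE cards_eq0; apply/eqP/setP => p; rewrite !inE.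
have [x xA x_min] := arg_minnP (fun y => nat_of_ord (pos y)) x0A.
have {}xA : x \in A := xA.
rewrite npairsE -(card_in_imset (@pair_top_inj A)) (cardsD1 x A) xA add1n /=.
apply/subset_leq_card/subsetP => _ /imsetP [[a b] + ->].
rewrite !inE /= lt_pos /adjn => /and4P [aA bA _ ab].
rewrite [_ \in A](_ : _ = true) ?andbT; last by rewrite /pair_top; case: ifP.
by rewrite -pos_eqE pos_pair_top /=; have := x_min a aA; have := x_min b bA; lia.
Qed.

Definition pos_range lo hi : {set X} := [set x | lo <= pos x < hi].

Lemma card_range_le_npairs lo hi :
  #|pos_range lo hi| <= (npairs (pos_range lo hi)).+1.
Proof.
set I := pos_range lo hi.
have [->|[x0 x0I]] := set_0Vmem I; first by rewrite cards0.
have [x xI x_min] := arg_minnP (fun y => nat_of_ord (pos y)) x0I.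
have {}xI : x \in I := xI.
rewrite npairsE -(card_in_imset (@pair_top_inj I)) (cardsD1 x I) xI add1n ltnS.
apply/subset_leq_card/subsetP => y; rewrite in_setD1 -pos_eqE => /andP [y_ne yI].
have := x_min y yI; move: xI yI; rewrite !inE => /andP [lo_x _] /andP [_ y_hi] x_y.
pose z := pt (Ordinal (leq_ltn_trans (leq_pred (pos y)) (ltn_ord (pos y)))).
have pos_z : nat_of_ord (pos z) = (pos y).-1 by rewrite ptK.
(* [y] is the top of the strict pair it forms with its predecessor [z]. *)
apply/imsetP; exists (if odd (pos z) == up then (z, y) else (y, z)).
  by case: ifP => z_up; rewrite !inE /= lt_pos /adjn pos_z; lia.
by apply/eqP; rewrite -pos_eqE pos_pair_top; case: ifP => _ /=; rewrite pos_z; lia.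
Qed.

Lemma max_ordered_range lo hi (Y : {set X}) :
  pos_range lo hi \subset Y -> max_ordered Y (pos_range lo hi).
Proof.
move=> range_Y; split=> // B _ card_B.
by have := npairs_le_card B; have := card_range_le_npairs lo hi; rewrite card_B; lia.
Qed.

End FenceCoordinates.

Section OddFence.
Variables (X : fposet) (up : bool) (m : nat).
Local Notation N := m.*2.+1.
Variables (pt : 'I_N -> X) (pos : X -> 'I_N).
Hypotheses (ptK : cancel pt pos) (posK : cancel pos pt).
Hypothesis le_pos : forall a b, fp_le a b = fence_le up (pos a) (pos b).

Definition mirror_fun (x : X) : X := pt (rev_ord (pos x)).

Lemma mirror_fun_inj : injective mirror_fun.
Proof. by move=> x y /(can_inj ptK) /rev_ord_inj /(can_inj posK). Qed.

Definition mirror : {perm X} := perm mirror_fun_inj.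

Lemma pos_mirror x : nat_of_ord (pos (mirror x)) = m.*2 - pos x.
Proof. by rewrite permE /mirror_fun ptK /= subSS. Qed.

Lemma mirrorK : involutive mirror.
Proof.
by move=> x; apply/eqP; rewrite -(pos_eqE posK) !pos_mirror; have := ltn_ord (pos x); lia.
Qed.

Lemma mirror_aut : is_aut mirror.
Proof.
by move=> a b; rewrite !le_pos !permE /mirror_fun !ptK fence_le_rev /= negbK odd_double addbF.
Qed.

Lemma mirror_range lo hi :
  hi <= N -> mirror @: pos_range pos lo hi = pos_range pos (N - hi) (N - lo).
Proof.
move=> hi_le; rewrite (can_imset_pre _ mirrorK); apply/setP => x.
by rewrite !inE pos_mirror; have := ltn_ord (pos x); lia.
Qed.

Definition left_half := pos_range pos 0 m.
Definition right_half := pos_range pos m.+1 N.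

Lemma mirror_left_half : mirror @: left_half = right_half.
Proof. by rewrite /left_half /right_half mirror_range; [congr pos_range|]; lia. Qed.

Lemma mirror_right_half : mirror @: right_half = left_half.
Proof. by rewrite -mirror_left_half -imset_comp (eq_imset _ mirrorK) imset_id. Qed.

Lemma Sigma_mirror : Sigma mirror = left_half :|: right_half.
Proof.
by apply/setP => x; rewrite !inE -(pos_eqE posK) pos_mirror; have := ltn_ord (pos x); lia.
Qed.

Lemma halves_incomparable a b :
  a \in left_half -> b \in right_half -> ~~ (fp_le a b || fp_le b a).
Proof. by rewrite !inE !le_pos fence_comparableE -val_eqE /adjn /=; lia. Qed.

Lemma ell_Sigma_mirror : ell (Sigma mirror) = ell left_half.
Proof.
rewrite Sigma_mirror (ell_setU_incomparable halves_incomparable).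
by rewrite -mirror_left_half ell_imset ?maxnn //; apply: mirror_aut.
Qed.

Definition halves (i : nat) : {set X} := if i == 0 then left_half else right_half.

Lemma family_ok_halves : family_ok mirror 2 halves.
Proof.
have L_Sigma : left_half \subset Sigma mirror by rewrite Sigma_mirror subsetUl.
have R_Sigma : right_half \subset Sigma mirror by rewrite Sigma_mirror subsetUr.
have max_ordered_range := max_ordered_range ptK posK le_pos.
have ell_R : ell right_half = ell left_half.
  by rewrite -mirror_left_half ell_imset //; apply: mirror_aut.
split; last first.
  by rewrite big_ord_recr big_ord_recr big_ord0 /= set0U Sigma_mirror.
case=> [|[|//]] _; rewrite /halves /=.
- split; [| exact: max_ordered_range | exact: mirror_left_half | by rewrite ell_Sigma_mirror].
  exact: L_Sigma.
- split; [| exact: max_ordered_range | exact: mirror_right_half | by rewrite ell_Sigma_mirror].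
  exact: R_Sigma.
Qed.

Lemma halves_minimal S : family_ok mirror 2 S -> #|left_half| <= #|S 0|.
Proof.
case=> S_ok; have [_ _ mirror_S0 _] := S_ok 0 isT.
rewrite big_ord_recr big_ord_recr big_ord0 /= set0U -mirror_S0 Sigma_mirror => cover.
have : #|left_half :|: right_half| <= #|S 0| + #|S 0|.
  by rewrite -cover cardsU card_imset ?leq_subr //; apply: perm_inj.
rewrite cardsU -mirror_left_half card_imset; last exact: perm_inj.
rewrite mirror_left_half (_ : _ :&: _ = set0) ?cards0; first lia.
by apply/setP => x; rewrite !inE; lia.
Qed.

Lemma iso_sub_left_half : iso_sub left_half (fence up m).
Proof.
have le_mN : m <= N by lia.
exists (fun i => pt (widen_ord le_mN i)); split.
- by move=> i j /= /(can_inj ptK) /(congr1 (@nat_of_ord _)) /= /(@ord_inj m).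
- apply/setP => x; rewrite inE /=; apply/imsetP/idP => [[i _ ->]|x_lt].
    by rewrite ptK; case: i.
  by exists (Ordinal x_lt); rewrite ?inE // -[LHS]posK; congr pt; apply: val_inj.
- by move=> i j; rewrite le_pos !ptK /= !fence_leE.
Qed.

Lemma mirror_generator : generator_fam (fence up m) 2 mirror halves.
Proof.
split=> //.
- exact: mirror_aut.
- exact: family_ok_halves.
- case=> [|[|//]] _; first exact: iso_sub_left_half.
  rewrite /halves /= -mirror_left_half.
  by apply: iso_sub_imset; [exact: mirror_aut | exact: iso_sub_left_half].
- exact: halves_minimal.
Qed.

Definition level (x : X) : 'I_m.+1 := inord (minn (pos x) (m.*2 - pos x)).

Lemma levelE x : nat_of_ord (level x) = minn (pos x) (m.*2 - pos x).
Proof. by rewrite inordK //; have := ltn_ord (pos x); lia. Qed.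

Definition level_pt (i : 'I_m.+1) : X := pt (inord i).

Lemma level_ptK : cancel level_pt level.
Proof.
move=> i; apply: val_inj; rewrite /= levelE /level_pt ptK inordK;
  have := ltn_ord i; lia.
Qed.

Lemma level_aut (s : {perm X}) x : is_aut s -> level (s x) = level x.
Proof.
move=> s_aut; pose f i := pos (s (pt i)).
have f_inj : injective f by move=> i j /(can_inj posK) /perm_inj /(can_inj ptK).
have f_le i j : fence_le up (f i) (f j) = fence_le up i j.
  by rewrite -le_pos s_aut le_pos !ptK.
have pos_sx : pos (s x) = f (pos x) by rewrite /f posK.
apply: val_inj; rewrite /= !levelE pos_sx; have := ltn_ord (pos x).
by case: (fence_aut_cases f_inj f_le) => ->; rewrite /=; lia.
Qed.

Lemma sym1_level Q r a b : sym1 Q r a b -> level a = level b.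
Proof.
case/sym1_orbit => s [s_aut _ [q ->]]; rewrite permX.
by elim: q => //= q IH; rewrite level_aut.
Qed.

Lemma level_sym1 a b : level a = level b -> a = b \/ sym1 (fence up m) 2 a b.
Proof.
move/(congr1 (@nat_of_ord _)); rewrite !levelE => level_eq.
have [pos_eq|pos_ne] := eqVneq (pos a) (pos b); first by left; apply: (can_inj posK).
have b_mirror : b = mirror a.
  apply/eqP; rewrite -(pos_eqE posK) pos_mirror; move: pos_ne; rewrite -val_eqE /=.
  by have := ltn_ord (pos a); have := ltn_ord (pos b); lia.
have a_Sigma : a \in Sigma mirror.
  by rewrite inE -b_mirror eq_sym; apply: contraNneq pos_ne => ->.
right; exists mirror, halves; split; first exact: mirror_generator.
rewrite Sigma_mirror in a_Sigma; case/setUP: a_Sigma => [aL|aR].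
- have aR : a \notin right_half by move: aL; rewrite !inE; lia.
  exists 0, 1, 1; rewrite /halves /=; split=> //; first by apply: contraNneq aR => <-.
  by rewrite expg1 b_mirror -mirror_left_half imset_f.
- have aL : a \notin left_half by move: aR; rewrite !inE; lia.
  exists 1, 0, 1; rewrite /halves /=; split=> //; first by apply: contraNneq aL => <-.
  by rewrite expg1 b_mirror -mirror_right_half imset_f.
Qed.

Lemma le_level_image i j :
  fence_le up i j <-> exists e f, [/\ level e = i, level f = j & fp_le e f].
Proof.
split=> [le_ij|[e [f [<- <- le_ef]]]].
  exists (level_pt i), (level_pt j); rewrite !level_ptK le_pos /level_pt !ptK; split=> //.
  have i_lt := ltn_ord i; have j_lt := ltn_ord j.
  by move: le_ij; rewrite !fence_leE !inordK //; lia.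
move: le_ef; rewrite le_pos !fence_leE !levelE /adjn.
by have := ltn_ord (pos e); have := ltn_ord (pos f); lia.
Qed.

Lemma quot_level_iso : fp_iso (quot X (fence up m) 2) (fence up m.+1).
Proof.
apply: (@quot_iso_fibres X (fence up m) (fence up m.+1) 2 level level_pt level_ptK).
- exact: sym1_level.
- exact: level_sym1.
- exact: le_level_image.
Qed.

End OddFence.

Lemma quot_odd_fence X up m : fp_iso (fence up m.*2.+1) X ->
  fp_iso (quot X (fence up m) 2) (fence up m.+1).
Proof.
case=> pt [[pos ptK posK] le_pt]; apply: (quot_level_iso ptK posK) => a b.
by have := le_pt (pos a) (pos b); rewrite !posK.
Qed.

Lemma fdown_even n : ~~ odd n -> fdown n = n.
Proof. by rewrite /fdown; case: n => //= n ->. Qed.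

Lemma fdown_aux_fuel k k' x : 2 <= x -> x <= k -> x <= k' ->
  fdown_aux k x = fdown_aux k' x.
Proof.
elim: k k' x => [|k IH] [|k'] x x_ge2 x_k x_k'; [lia | lia | lia |].
rewrite /=; case: ifP => // /negbFE odd_x.
by apply: IH; rewrite /fmap odd_x; lia.
Qed.

Lemma fdown_odd n : odd n -> 3 <= n -> fdown n = fdown n.+1./2.
Proof.
case: n => // n odd_n n_ge3.
have -> : fdown n.+1 = fdown_aux n (fmap n.+1) by rewrite /fdown /= -/(odd n.+1) odd_n.
by rewrite /fdown /fmap odd_n; apply: fdown_aux_fuel; lia.
Qed.

Lemma even_fdown n : 2 <= n -> ~~ odd (fdown n).
Proof.
elim/ltn_ind: n => n IH n_ge2.
have [even_n|odd_n] := boolP (~~ odd n); first by rewrite fdown_even.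
rewrite negbK in odd_n; rewrite fdown_odd //; last by lia.
by apply: IH; lia.
Qed.

Lemma fence_iter_quot_fdown up n X : 2 <= n -> fp_iso (fence up n) X ->
  exists s : seq (fposet * nat),
    all (fun qr => 2 <= qr.2) s /\ fp_iso (iter_quot X s) (fence up (fdown n)).
Proof.
elim/ltn_ind: n X => n IH X n_ge2 iso_X.
have [even_n|odd_n] := boolP (~~ odd n).
  by exists [::]; rewrite fdown_even //; split=> //; apply: fp_iso_sym.
rewrite negbK in odd_n.
have n_eq : (n./2).*2.+1 = n by lia.
have iso_quot : fp_iso (quot X (fence up n./2) 2) (fence up n./2.+1).
  by apply: quot_odd_fence; rewrite n_eq.
have [s [s_ge2 iso_s]] := IH n./2.+1 ltac:(lia) _ ltac:(lia) (fp_iso_sym iso_quot).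
exists ((fence up n./2, 2) :: s); split=> //.
have -> : fdown n = fdown n./2.+1 by rewrite fdown_odd; [congr fdown | |]; lia.
exact: iso_s.
Qed.

Theorem mainTheorem8 :
  (forall (up : bool) (n : nat), ~~ odd n -> locally_unsymmetric (fence up n)) /\
  (forall (up : bool) (n : nat), odd n -> 3 <= n ->
     retractable (fence up n) (fence false (fdown n))).
Proof.
split=> [|up n odd_n n_ge3]; first exact: even_fence_locally_unsymmetric.
have [s [s_ge2 iso_s]] := fence_iter_quot_fdown (ltnW n_ge3) (fp_iso_refl (fence up n)).
have even_fdown_n := even_fdown (ltnW n_ge3).
exists s; split=> //; first exact: fp_iso_trans iso_s (fence_iso_lower up even_fdown_n).
by move/fp_iso_card; rewrite !card_ord => fdown_n; move: even_fdown_n; rewrite fdown_n odd_n.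
Qed.
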